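(* For every $n\ge1$, the minimum number of flippable faces of a locally valid MV assignment of $M_{2,n}$ is $2$. Moreover, for every $n\ge 2$, exactly four locally valid MV assignments of $M_{2,n}$ have exactly $2$ flippable faces, and each of them is colored magenta (i.e., has the same number of flippable faces as its restriction to $M_{2,n-1}$).
   Context: The $2\times n$ Miura-ori $M_{2,n}$ ($n\ge1$) has faces $\alpha_{i,j}$ ($i\in\{1,2\}$, $j\in\{1,\dots,n\}$), interior vertices $x_1,\dots,x_{n-1}$, and creases $e_0$ and $e_{3k-1},e_{3k},e_{3k+1}$ ($k=1,\dots,n-1$). At $x_k$ the creases are left $e_{3k-3}$, top $e_{3k-1}$, right $e_{3k}$, bottom $e_{3k+1}$. Face $\alpha_{1,j}$ is bordered by those of $e_{3j-4}$ (iff $j\ge2$), $e_{3j-3}$, $e_{3j-1}$ (iff $j\le n-1$); $\alpha_{2,j}$ by those of $e_{3j-2}$ (iff $j\ge2$), $e_{3j-3}$, $e_{3j+1}$ (iff $j\le n-1$). An MV assignment $\mu$ maps creases to $\{1,-1\}$ (mountain/valley); it is locally valid if for each $k$ exactly one of $\mu(e_{3k-1}),\mu(e_{3k}),\mu(e_{3k+1})$ differs from $\mu(e_{3k-3})$. The face flip $\mu_\alpha$ negates $\mu$ on the creases bordering $\alpha$; $\alpha$ is flippable under $\mu$ if $\mu,\mu_\alpha$ are both locally valid; $f(\mu)$ is the number of flippable faces (the degree of $\mu$ in the origami flip graph). For $n\ge2$, the restriction of a locally valid assignment $\mu'$ of $M_{2,n}$ to the creases of $M_{2,n-1}$ (all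 creases except $e_{3n-4},e_{3n-3},e_{3n-2}$) is a locally valid assignment $\mu$ of $M_{2,n-1}$; $\mu'$ is colored blue, orange or magenta according as $f(\mu')-f(\mu)$ equals $2$, $1$ or $0$. Both locally valid assignments of $M_{2,1}$ are colored blue. *)

From mathcomp Require Import all_boot.
Set Implicit Arguments. Unset Strict Implicit. Unset Printing Implicit Defensive.

(* Creases of M_{2,n}: e_0 and e_2, ..., e_{3n-2} (index 1 is unused).
   An MV assignment is stored as a (3n-2)-tuple of booleans:
   crease e_k is stored at position pos k (0 -> 0, k >= 2 -> k-1).
   Boolean true encodes mountain (+1), false encodes valley (-1). *)
Definition pos (k : nat) : nat := if k == 0 then 0 else k.-1.

Definition MV (n : nat) := (3 * n - 2).-tuple bool.

Definition mv_at (s : seq bool) (k : nat) : bool := nth false s (pos k).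

Definition lv_fun (n : nat) (m : nat -> bool) : bool :=
  all (fun k => ((m (3*k-1) != m (3*k-3)) + (m (3*k) != m (3*k-3))
                 + (m (3*k+1) != m (3*k-3)) == 1)%N)
      (iota 1 n.-1).

(* creases bordering face alpha_{i,j}; row i = 0 means row 1, i = 1 means row 2;
   j ranges over 1..n *)
Definition border (n : nat) (i : 'I_2) (j : nat) : seq nat :=
  if val i == 0 then
    (if 2 <= j then [:: 3*j-4] else [::]) ++ [:: 3*j-3]
      ++ (if j <= n-1 then [:: 3*j-1] else [::])
  else
    (if 2 <= j then [:: 3*j-2] else [::]) ++ [:: 3*j-3]
      ++ (if j <= n-1 then [:: 3*j+1] else [::]).

Definition flip_fun (n : nat) (i : 'I_2) (j : nat) (m : nat -> bool) : nat -> bool :=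
  fun k => if k \in border n i j then ~~ m k else m k.

Definition locally_valid (n : nat) (s : seq bool) : bool := lv_fun n (mv_at s).

Definition flippable (n : nat) (s : seq bool) (i : 'I_2) (j : nat) : bool :=
  lv_fun n (mv_at s) && lv_fun n (flip_fun n i j (mv_at s)).

(* number of flippable faces; faces alpha_{i+1, j+1} for i : 'I_2, j : 'I_n *)
Definition nflip (n : nat) (s : seq bool) : nat :=
  #|[pred ij : 'I_2 * 'I_n | flippable n s ij.1 (val ij.2).+1]|.

(* restriction of an assignment of M_{2,n} to the creases of M_{2,n-1}
   (drops e_{3n-4}, e_{3n-3}, e_{3n-2}, the last three positions) *)
Definition restrict (n : nat) (s : seq bool) : seq bool := take (3 * n.-1 - 2) s.

Definition magenta (n : nat) (s : seq bool) : Prop :=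
  nflip n s = nflip n.-1 (restrict n s).

From mathcomp Require Import all_boot zify.

(* At an interior vertex exactly one arm (top, right or bottom) differs from
   the left crease.  Flipping the face alpha_{1,j} (resp. alpha_{2,j}) keeps the
   assignment valid iff the bottom (resp. top) arm of x_{j-1} and the top
   (resp. bottom) arm of x_j do not differ.  No vertex has both its top and
   bottom arm differing, so the first and the last column always contain a
   flippable face and f >= 2.  If f = 2, no face of the middle columns is
   flippable, which propagates from x_1 to x_{n-1} the choice of the differing
   arm: every vertex bends the same arm (top or bottom).  Such an assignment
   is determined by this choice and by the value of e_0, so there are four of
   them, and their restrictions to M_{2,n-1} are of the same kind. *)

Set Implicit Arguments.
Unset Strict Implicit.
Unset Printing Implicit Defensive.

Definition vertex_valid (m : nat -> bool) (k : nat) : bool :=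
  ((m (3*k-1) != m (3*k-3)) + (m (3*k) != m (3*k-3)) + (m (3*k+1) != m (3*k-3)) == 1)%N.

Definition differs (top : bool) (m : nat -> bool) (k : nat) : bool :=
  m (if top then 3*k-1 else 3*k+1) != m (3*k-3).

Lemma lv_funP n m : reflect (forall k, 0 < k < n -> vertex_valid m k) (lv_fun n m).
Proof.
apply: (iffP allP) => valid k; last by rewrite mem_iota => hk; apply: valid; lia.
by move=> hk; apply: valid; rewrite mem_iota; lia.
Qed.

Lemma vertex_valid_differsN m k t :
  vertex_valid m k -> differs t m k -> ~~ differs (~~ t) m k.
Proof.
rewrite /vertex_valid /differs.
by case: t; case: (m (3*k-3)); case: (m (3*k-1)); case: (m (3*k)); case: (m (3*k+1)).
Qed.

Lemma uniform_differsE n m c : lv_fun n m -> (forall k, 0 < k < n -> differs c m k) ->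
  forall t k, 0 < k < n -> differs t m k = (t == c).
Proof.
move=> /lv_funP valid uniform t k hk; have c_k := uniform k hk.
case: (eqVneq t c) => [-> // | tNc]; have -> : t = ~~ c by move: tNc; case: t; case: (c).
exact/negbTE/(vertex_valid_differsN (valid k hk)).
Qed.

Lemma vertex_creases_eq m m' k : vertex_valid m k -> vertex_valid m' k ->
  m (3*k-3) = m' (3*k-3) -> (forall t, differs t m k = differs t m' k) ->
  {in [:: 3*k-1; 3*k; 3*k+1], m =1 m'}.
Proof.
move=> + + eq_left /[dup] /(_ true) + /(_ false); rewrite /vertex_valid /differs /= eq_left.
move=> + + + + d; rewrite !inE => + + + + /or3P[] /eqP ->.
all: by case: (m' (3*k-3)); case: (m (3*k-1)); case: (m (3*k)); case: (m (3*k+1));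
  case: (m' (3*k-1)); case: (m' (3*k)); case: (m' (3*k+1)).
Qed.

Lemma crease_cases n d : d != 1 -> d <= 3*n-2 ->
  d = 0 \/ exists2 k, 0 < k < n & d \in [:: 3*k-1; 3*k; 3*k+1].
Proof.
move=> d1 dn; have [->|d0] := posnP d; [by left | right].
by exists (d.+1 %/ 3); rewrite ?inE; lia.
Qed.

Lemma eq_creases_of_differs n m m' : lv_fun n m -> lv_fun n m' -> m 0 = m' 0 ->
  (forall t k, 0 < k < n -> differs t m k = differs t m' k) ->
  forall d, d != 1 -> d <= 3*n-2 -> m d = m' d.
Proof.
move=> /lv_funP valid /lv_funP valid' eq0 same.
have vertex_eq k : 0 < k < n -> m (3*k-3) = m' (3*k-3) -> {in [:: 3*k-1; 3*k; 3*k+1], m =1 m'}.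
  by move=> hk eq_left; apply: vertex_creases_eq (valid k hk) (valid' k hk) eq_left (fun t => same t k hk).
have left_eq k : 0 < k < n -> m (3*k-3) = m' (3*k-3).
  elim: k => [//|k IH] hk; have [-> //|k0] := posnP k.
  rewrite (_ : 3*k.+1-3 = 3*k); last by lia.
  by apply: vertex_eq; rewrite ?inE ?eqxx ?orbT ?IH //; lia.
move=> d d1 dn; have [->//|[k hk]] := crease_cases d1 dn.
exact: vertex_eq hk (left_eq k hk) d.
Qed.

Lemma mem_border n i j d : (d \in border n i j) =
  if val i == 0 then [|| (2 <= j) && (d == 3*j-4), d == 3*j-3 | (j <= n-1) && (d == 3*j-1)]
  else [|| (2 <= j) && (d == 3*j-2), d == 3*j-3 | (j <= n-1) && (d == 3*j+1)].
Proof. by rewrite /border; case: ifP => _; case: ifP => _; case: ifP => _; rewrite !inE ?orbF. Qed.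

Ltac decide_nat_conditions := repeat match goal with
  | |- context [if ?b then _ else _] =>
      first [have -> : b = true by lia | have -> : b = false by lia]
  end.

Lemma vertex_valid_flip n i j m k : 0 < j <= n -> 0 < k < n -> vertex_valid m k ->
  vertex_valid (flip_fun n i j m) k =
  if k == j then ~~ differs (val i == 0) m k
  else if k == j.-1 then ~~ differs (val i != 0) m k else true.
Proof.
move=> hj hk; rewrite /vertex_valid /differs /flip_fun !mem_border.
case: (eqVneq k j) => ekj; case: (eqVneq k j.-1) => ekj1; first lia.
all: case: (val i == 0); decide_nat_conditions.
all: by case: (m (3*k-3)); case: (m (3*k-1)); case: (m (3*k)); case: (m (3*k+1)).
Qed.

(* [top] selects the face alpha_{1,j} of the first row, [~~ top] the face alpha_{2,j}. *)
Definition flippable_at n (m : nat -> bool) (top : bool) (j : nat) : bool :=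
  ((j == 1) || ~~ differs (~~ top) m j.-1) && ((j == n) || ~~ differs top m j).

Lemma lv_fun_flip n i j m : lv_fun n m -> 0 < j <= n ->
  lv_fun n (flip_fun n i j m) = flippable_at n m (val i == 0) j.
Proof.
move=> /lv_funP valid hj; rewrite /flippable_at.
apply/lv_funP/andP => [valid_flip | [left_ok right_ok] k hk].
- split; [case: (eqVneq j 1) => //= j1 | case: (eqVneq j n) => //= jn].
  + have := valid_flip j.-1; rewrite vertex_valid_flip ?valid; try lia.
    by rewrite (_ : (j.-1 == j) = false) ?eqxx; [apply; lia | lia].
  + have := valid_flip j; rewrite vertex_valid_flip ?valid; try lia.
    by rewrite eqxx; apply; lia.
- rewrite vertex_valid_flip ?valid //.
  case: (eqVneq k j) => [ekj|_]; first by move: right_ok; rewrite ekj; case: eqP => //; lia.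
  case: (eqVneq k j.-1) => [ekj|//]; move: left_ok; rewrite ekj; case: eqP => //; lia.
Qed.

Lemma flippable_at_first n m : lv_fun n m -> 0 < n -> flippable_at n m (~~ differs true m 1) 1.
Proof.
move=> /lv_funP valid n0; rewrite /flippable_at eqxx /=; case: (eqVneq 1 n) => //= n1.
have valid1 := valid 1 (ltac:(lia)).
by case: (boolP (differs true m 1)) => [/(vertex_valid_differsN valid1)|].
Qed.

Lemma flippable_at_last n m : lv_fun n m -> 0 < n -> flippable_at n m (differs true m n.-1) n.
Proof.
move=> /lv_funP valid n0; rewrite /flippable_at eqxx andbT; case: (eqVneq n 1) => //= n1.
have validn := valid n.-1 (ltac:(lia)).
by case: (boolP (differs true m n.-1)) => [/(vertex_valid_differsN validn)|].
Qed.

Lemma differs_of_not_flippable_at n m c : lv_fun n m ->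
  (forall j, 0 < j < n -> ~~ flippable_at n m c j) -> forall k, 0 < k < n -> differs c m k.
Proof.
move=> /lv_funP valid noflip; elim=> [//|k IH] hk.
have := noflip k.+1 hk; rewrite /flippable_at (_ : (k.+1 == n) = false) /=; last by lia.
have [-> | k0] := posnP k; first by rewrite eqxx /= negbK.
have k1 : (k.+1 == 1) = false by lia.
by rewrite k1 (vertex_valid_differsN (valid k _) (IH _)) /= ?negbK //; lia.
Qed.

Lemma flippable_at_uniform n m c : lv_fun n m -> (forall k, 0 < k < n -> differs c m k) ->
  forall t j, 0 < j <= n -> flippable_at n m t j = if t == c then j == n else j == 1.
Proof.
move=> lv_m uniform t j hj; rewrite /flippable_at.
case: (eqVneq j 1) => [j1|j1]; case: (eqVneq j n) => [jn|jn] //=.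
all: rewrite ?(uniform_differsE lv_m uniform); try lia.
all: by case: t; case: (c).
Qed.

Definition flippable_faces n s : pred ('I_2 * 'I_n) :=
  [pred ij | flippable n s ij.1 (val ij.2).+1].
Arguments flippable_faces : clear implicits.

Lemma nflipE n s : nflip n s = #|flippable_faces n s|.
Proof. by []. Qed.

Definition row (top : bool) : 'I_2 := if top then ord0 else ord_max.

Lemma row_top top : (val (row top) == 0) = top.
Proof. by case: top. Qed.

Lemma eq_row i t : (i == row t) = ((val i == 0) == t).
Proof. by case: i => -[|[|//]] ?; case: t. Qed.

Lemma mem_flippable_faces n s i (o : 'I_n) : locally_valid n s ->
  ((i, o) \in flippable_faces n s) = flippable_at n (mv_at s) (val i == 0) o.+1.
Proof.
move=> lv_s; rewrite inE /flippable (lv_s : lv_fun n (mv_at s)) lv_fun_flip //.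
exact: ltn_ord o.
Qed.

Lemma nflip_ge2 n s : 0 < n -> locally_valid n s -> 1 < nflip n s.
Proof.
case: n => [//|n] _ lv_s; rewrite nflipE; apply/card_gt1P.
have first_ok := flippable_at_first lv_s (ltn0Sn n).
have last_ok := flippable_at_last lv_s (ltn0Sn n).
case: n lv_s first_ok last_ok => [|n] lv_s first_ok last_ok.
  exists (row true, ord0), (row false, ord0).
  by rewrite !mem_flippable_faces // !row_top /flippable_at.
exists (row (~~ differs true (mv_at s) 1), ord0), (row (differs true (mv_at s) n.+1), ord_max).
by rewrite !mem_flippable_faces // !row_top first_ok last_ok xpair_eqE andbF.
Qed.

Lemma card_le2_mem (T : finType) (A : {pred T}) x y z : #|A| <= 2 ->
  x != y -> x \in A -> y \in A -> z \in A -> (z == x) || (z == y).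
Proof.
move=> le2 xy xA yA zA; apply/norP => -[zx zy].
suff : 2 < #|A| by rewrite ltnNge le2.
by apply/card_gt2P; exists x, y, z; rewrite eq_sym in zy.
Qed.

Lemma not_flippable_at_of_nflip2 n s : 1 < n -> locally_valid n s -> nflip n s = 2 ->
  forall j, 0 < j < n -> ~~ flippable_at n (mv_at s) (differs true (mv_at s) 1) j.
Proof.
case: n => [//|n] n1 lv_s nflip2 j hj; set c := differs true (mv_at s) 1.
pose first_face := (row (~~ c), ord0 : 'I_n.+1).
pose last_face := (row (differs true (mv_at s) n), ord_max : 'I_n.+1).
have hj' : j.-1 < n.+1 by lia.
apply/negP => flip_cj.
have := @card_le2_mem _ (flippable_faces n.+1 s) first_face last_face (row c, Ordinal hj').
rewrite -nflipE nflip2 !mem_flippable_faces //= !row_top prednK; last by lia.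
rewrite flippable_at_first ?flippable_at_last // !xpair_eqE !eq_row !row_top.
have ord0_max : (ord0 == ord_max :> 'I_n.+1) = false by rewrite -val_eqE /=; lia.
have j_max : (Ordinal hj' == ord_max) = false by rewrite -val_eqE /=; lia.
rewrite ord0_max j_max !andbF orbF => /(_ isT isT isT isT flip_cj).
by case: (c).
Qed.

Lemma nflip_uniform n s c : 0 < n -> locally_valid n s ->
  (forall k, 0 < k < n -> differs c (mv_at s) k) -> nflip n s = 2.
Proof.
case: n s => [//|n] s _ lv_s uniform.
have -> : 2 = #|pred2 (row c, ord_max : 'I_n.+1) (row (~~ c), ord0)|.
  by rewrite card2 xpair_eqE eq_row row_top; case: (c).
rewrite nflipE; apply: eq_card => -[i o]; rewrite mem_flippable_faces // !inE !xpair_eqE !eq_row.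
rewrite (flippable_at_uniform lv_s uniform); last by have := ltn_ord o; lia.
by rewrite -!val_eqE /=; case: (i == 0 :> nat); case: (c); rewrite /= ?orbF.
Qed.

(* Position [p] of an assignment stores the crease [e_(crease p)]; [crease] inverts [pos]. *)
Definition crease (p : nat) : nat := if p is 0 then 0 else p.+1.

Definition mv_of n (m : nat -> bool) : seq bool := mkseq (m \o crease) (3 * n - 2).

Lemma size_mv_of n m : size (mv_of n m) == 3 * n - 2.
Proof. by rewrite size_mkseq. Qed.

Lemma mv_at_mv_of n m d : 0 < n -> d != 1 -> d <= 3 * n - 2 -> mv_at (mv_of n m) d = m d.
Proof.
move=> n0 d1 dn; rewrite /mv_at /pos nth_mkseq /=; last by case: eqP; lia.
by case: eqP => [->|_] //; case: d d1 {dn} => [|[|d]].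
Qed.

Lemma mv_of_mv_at n s : size s = 3 * n - 2 -> mv_of n (mv_at s) = s.
Proof.
by move=> size_s; rewrite /mv_of -size_s -[in RHS](mkseq_nth false s); apply: eq_mkseq => -[].
Qed.

Lemma eq_mv_of n m m' : (forall d, d != 1 -> d <= 3 * n - 2 -> m d = m' d) ->
  mv_of n m = mv_of n m'.
Proof.
move=> eq_m; apply/eq_in_map => p; rewrite mem_iota => hp /=.
by apply: eq_m; rewrite /crease; case: p hp => //; lia.
Qed.

Lemma restrict_mv_of n m : restrict n (mv_of n m) = mv_of n.-1 m.
Proof. by rewrite /restrict /mv_of /mkseq -map_take take_iota; congr map; congr iota; lia. Qed.

Lemma lv_fun_mv_of n m : lv_fun n (mv_at (mv_of n m)) = lv_fun n m.
Proof.
apply: eq_in_all => k; rewrite mem_iota => hk.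
by rewrite /vertex_valid !mv_at_mv_of //; lia.
Qed.

Lemma differs_mv_of n m t k : 0 < k < n -> differs t (mv_at (mv_of n m)) k = differs t m k.
Proof. by move=> hk; rewrite /differs !mv_at_mv_of //; case: t; lia. Qed.

(* Creases e_(3k-1) and e_(3k+1) are the ones congruent to 2 and 1 mod 3: every vertex
   bends its top arm (c) or its bottom arm (~~ c), and the other creases all equal b. *)
Definition uniform_crease (c b : bool) (d : nat) : bool := b (+) (d %% 3 == if c then 2 else 1).

Lemma vertex_creases_mod3 k : 0 < k ->
  [/\ (3*k-3) %% 3 = 0, (3*k-1) %% 3 = 2, (3*k) %% 3 = 0 & (3*k+1) %% 3 = 1].
Proof. by move=> k0; split; lia. Qed.

Lemma vertex_valid_uniform_crease c b k : 0 < k -> vertex_valid (uniform_crease c b) k.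
Proof.
move=> /vertex_creases_mod3[left top right bottom].
by rewrite /vertex_valid /uniform_crease left top right bottom; case: c; case: b.
Qed.

Lemma differs_uniform_crease c b t k : 0 < k -> differs t (uniform_crease c b) k = (t == c).
Proof.
move=> /vertex_creases_mod3[left top _ bottom].
by case: t; rewrite /differs /uniform_crease left ?top ?bottom; case: c; case: b.
Qed.

Definition uniform_mv n c b : MV n := Tuple (size_mv_of n (uniform_crease c b)).

Lemma locally_valid_uniform_mv n c b : locally_valid n (uniform_mv n c b).
Proof.
rewrite /locally_valid lv_fun_mv_of; apply/lv_funP => k /andP[k0 _].
exact: vertex_valid_uniform_crease.
Qed.

Lemma nflip_uniform_mv n c b : 0 < n -> nflip n (uniform_mv n c b) = 2.
Proof.
move=> n0; apply: (nflip_uniform (c := c) n0 (locally_valid_uniform_mv n c b)) => k hk.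
by rewrite differs_mv_of // differs_uniform_crease ?eqxx //; lia.
Qed.

Lemma uniform_mv_of_nflip2 n (s : MV n) : 1 < n -> locally_valid n s -> nflip n s = 2 ->
  exists c, s = uniform_mv n c (mv_at s 0).
Proof.
move=> n1 lv_s nflip2; set c := differs true (mv_at s) 1.
have uniform := differs_of_not_flippable_at lv_s (not_flippable_at_of_nflip2 n1 lv_s nflip2).
exists c; apply: val_inj; rewrite /= -[in LHS](mv_of_mv_at (size_tuple s)).
apply/eq_mv_of/eq_creases_of_differs => //.
- by apply/lv_funP => k /andP[k0 _]; apply: vertex_valid_uniform_crease.
- by rewrite /uniform_crease mod0n; case: (c); rewrite addbF.
- move=> t k hk; rewrite (uniform_differsE lv_s uniform) // differs_uniform_crease //; lia.
Qed.

Lemma uniform_mv_inj n : 1 < n -> injective (fun cb : bool * bool => uniform_mv n cb.1 cb.2).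
Proof.
move=> n1 [c b] [c' b'] /(congr1 (fun s : MV n => (mv_at s 0, mv_at s 2))) /=.
rewrite !mv_at_mv_of //; try lia.
by rewrite /uniform_crease; case: c; case: b; case: c'; case: b'.
Qed.

Theorem lemma4p5 :
  (forall n : nat, 1 <= n ->
     (exists mu : MV n, locally_valid n mu /\ nflip n mu = 2) /\
     (forall mu : MV n, locally_valid n mu -> 2 <= nflip n mu)) /\
  (forall n : nat, 2 <= n ->
     #|[pred mu : MV n | locally_valid n mu && (nflip n mu == 2)]| = 4 /\
     (forall mu : MV n, locally_valid n mu -> nflip n mu = 2 -> magenta n mu)).
Proof.
split=> n n_gt.
  split; last by move=> mu; apply: nflip_ge2.
  by exists (uniform_mv n true true); rewrite locally_valid_uniform_mv nflip_uniform_mv.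
split.
  rewrite (_ : 4 = #|codom (fun cb : bool * bool => uniform_mv n cb.1 cb.2)|); last first.
    by rewrite (card_codom (uniform_mv_inj n_gt)) card_prod card_bool.
  apply: eq_card => mu; rewrite inE; apply/andP/codomP => [[lv_mu /eqP nflip2] | [[c b] ->]].
    by have [c mu_eq] := uniform_mv_of_nflip2 n_gt lv_mu nflip2; exists (c, mv_at mu 0).
  by rewrite locally_valid_uniform_mv nflip_uniform_mv //; lia.
move=> mu lv_mu nflip2; have [c ->] := uniform_mv_of_nflip2 n_gt lv_mu nflip2.
by rewrite /magenta restrict_mv_of !nflip_uniform_mv //; lia.
Qed.
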